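(* Let $(A,\mu_A)$ and $(B,\mu_B)$ be associative algebras, $\alpha_A:A\to A$ and $\alpha_B:B\to B$ algebra maps, and $R:B\otimes A\to A\otimes B$ a twisting map satisfying $(\alpha_A\otimes\alpha_B)\circ R=R\circ(\alpha_B\otimes\alpha_A)$. Then $R$ is a Hom-twisting map between the Hom-associative algebras $A_{\alpha_A}$ and $B_{\alpha_B}$, and the Hom-associative algebras $A_{\alpha_A}\otimes_R B_{\alpha_B}$ and $(A\otimes_R B)_{\alpha_A\otimes\alpha_B}$ coincide.
   Context: Algebras over a field $k$, not assumed unital. A Hom-associative algebra is $(A,\mu,\alpha)$ with $\alpha(aa')=\alpha(a)\alpha(a')$ and $\alpha(a)(a'a'')=(aa')\alpha(a'')$. For an associative algebra $(A,\mu)$ and algebra endomorphism $\alpha$, $A_\alpha$ denotes the Hom-associative algebra $(A,\alpha\circ\mu,\alpha)$. A twisting map between associative algebras $A,B$ is a linear $R:B\otimes A\to A\otimes B$ with $R\circ(\mathrm{id}_B\otimes\mu_A)=(\mu_A\otimes\mathrm{id}_B)\circ(\mathrm{id}_A\otimes R)\circ(R\otimes\mathrm{id}_A)$ and $R\circ(\mu_B\otimes\mathrm{id}_A)=(\mathrm{id}_A\otimes\mu_B)\circ(R\otimes\mathrm{id}_B)\circ(\mathrm{id}_B\otimes R)$; the twisted tensor product $A\otimes_R B$ is the associative algebra $A\otimes B$ with product $(\mu_A\otimes\mu_B)\circ(\mathrm{id}_A\otimes R\otimes\mathrm{id}_B)$. For Hom-associative algebras $(A,\mu_A,\alpha_A),(B,\mu_B,\alpha_B)$,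 a Hom-twisting map is a linear $R:B\otimes A\to A\otimes B$ with $(\alpha_A\otimes\alpha_B)\circ R=R\circ(\alpha_B\otimes\alpha_A)$, $R\circ(\alpha_B\otimes\mu_A)=(\mu_A\otimes\alpha_B)\circ(\mathrm{id}_A\otimes R)\circ(R\otimes\mathrm{id}_A)$, $R\circ(\mu_B\otimes\alpha_A)=(\alpha_A\otimes\mu_B)\circ(R\otimes\mathrm{id}_B)\circ(\mathrm{id}_B\otimes R)$; the Hom-twisted tensor product $A\otimes_R B$ is $A\otimes B$ with product $(\mu_A\otimes\mu_B)\circ(\mathrm{id}_A\otimes R\otimes\mathrm{id}_B)$ and structure map $\alpha_A\otimes\alpha_B$. *)

(* Tensor products of k-vector spaces are modelled by finite
   lists of elementary tensors, identified up to the tensor-product equivalence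
   [teq]: two lists are equal in U (x) V iff every bilinear map out of U x V
   (into any k-vector space) gives the same sum on them.  This is exactly the
   kernel of the canonical surjection seq (U * V) ->> U (x) V. *)
From mathcomp Require Import all_boot all_algebra.
Set Implicit Arguments. Unset Strict Implicit. Unset Printing Implicit Defensive.
Import GRing.Theory.
Local Open Scope ring_scope.

Section TensorDefs.
Variable k : fieldType.

Definition linmap (U W : lmodType k) (f : U -> W) : Prop :=
  forall (c : k) (u u' : U), f (c *: u + u') = c *: f u + f u'.

Definition bilin (U V W : lmodType k) (f : U -> V -> W) : Prop :=
  (forall (v : V) (c : k) (u u' : U), f (c *: u + u') v = c *: f u v + f u' v) /\
  (forall (u : U) (c : k) (v v' : V), f u (c *: v + v') = c *: f u v + f u v').

Definition teq (U V : lmodType k) (s t : seq (U * V)) : Prop :=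
  forall (W : lmodType k) (f : U -> V -> W), bilin f ->
    \sum_(p <- s) f p.1 p.2 = \sum_(p <- t) f p.1 p.2.

Definition tscale (U V : lmodType k) (c : k) (s : seq (U * V)) : seq (U * V) :=
  [seq (c *: p.1, p.2) | p <- s].

(* a linear map X (x) Y -> U (x) V, given on elementary tensors by r
   (r x y is a representative of R (x (x) y)); linearity of R means that
   r is bilinear modulo teq. *)
Definition lin_tensor (X Y U V : lmodType k) (r : X -> Y -> seq (U * V)) : Prop :=
  (forall (y : Y) (c : k) (x x' : X),
      teq (r (c *: x + x') y) (tscale c (r x y) ++ r x' y)) /\
  (forall (x : X) (c : k) (y y' : Y),
      teq (r x (c *: y + y')) (tscale c (r x y) ++ r x y')).

Definition assoc_alg (A : lmodType k) (mu : A -> A -> A) : Prop :=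
  bilin mu /\ (forall x y z, mu x (mu y z) = mu (mu x y) z).

Definition alg_map (A : lmodType k) (mu : A -> A -> A) (al : A -> A) : Prop :=
  linmap al /\ (forall x y, al (mu x y) = mu (al x) (al y)).

Definition hom_assoc_alg (A : lmodType k) (mu : A -> A -> A) (al : A -> A) : Prop :=
  [/\ bilin mu, linmap al,
      (forall x y, al (mu x y) = mu (al x) (al y)) &
      (forall x y z, mu (al x) (mu y z) = mu (mu x y) (al z))].

(* A_alpha = (A, alpha o mu, alpha) : its multiplication *)
Definition twist_mul (A : lmodType k) (al : A -> A) (mu : A -> A -> A) : A -> A -> A :=
  fun x y => al (mu x y).

Section Twisting.
Variables A B : lmodType k.
Implicit Type r : B -> A -> seq (A * B).

Definition tmap r (s : seq (B * A)) : seq (A * B) :=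
  flatten [seq r p.1 p.2 | p <- s].

Definition R_idA r (s : seq (B * A * A)) : seq (A * B * A) :=
  flatten [seq [seq (x.1, x.2, p.2) | x <- r p.1.1 p.1.2] | p <- s].
Definition idA_R r (s : seq (A * B * A)) : seq (A * A * B) :=
  flatten [seq [seq (p.1.1, x.1, x.2) | x <- r p.1.2 p.2] | p <- s].
Definition idB_R r (s : seq (B * B * A)) : seq (B * A * B) :=
  flatten [seq [seq (p.1.1, x.1, x.2) | x <- r p.1.2 p.2] | p <- s].
Definition R_idB r (s : seq (B * A * B)) : seq (A * B * B) :=
  flatten [seq [seq (x.1, x.2, p.2) | x <- r p.1.1 p.1.2] | p <- s].

(* R o (alB (x) muA) = (muA (x) alB) o (id_A (x) R) o (R (x) id_A) *)
Definition tw_condA (muA : A -> A -> A) (alB : B -> B) r : Prop :=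
  forall s : seq (B * A * A),
    teq (tmap r [seq (alB p.1.1, muA p.1.2 p.2) | p <- s])
        [seq (muA q.1.1 q.1.2, alB q.2) | q <- idA_R r (R_idA r s)].

(* R o (muB (x) alA) = (alA (x) muB) o (R (x) id_B) o (id_B (x) R) *)
Definition tw_condB (muB : B -> B -> B) (alA : A -> A) r : Prop :=
  forall s : seq (B * B * A),
    teq (tmap r [seq (muB p.1.1 p.1.2, alA p.2) | p <- s])
        [seq (alA q.1.1, muB q.1.2 q.2) | q <- R_idB r (idB_R r s)].

Definition tw_comm (alA : A -> A) (alB : B -> B) r : Prop :=
  forall s : seq (B * A),
    teq [seq (alA p.1, alB p.2) | p <- tmap r s]
        (tmap r [seq (alB p.1, alA p.2) | p <- s]).

Definition twisting_map (muA : A -> A -> A) (muB : B -> B -> B) r : Prop :=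
  [/\ lin_tensor r, tw_condA muA id r & tw_condB muB id r].

Definition hom_twisting_map (muA : A -> A -> A) (alA : A -> A)
    (muB : B -> B -> B) (alB : B -> B) r : Prop :=
  [/\ lin_tensor r, tw_comm alA alB r, tw_condA muA alB r & tw_condB muB alA r].

(* the product (muA (x) muB) o (id (x) R (x) id) of A (x)_R B, as a map
   (A (x) B) x (A (x) B) -> A (x) B *)
Definition tprod (muA : A -> A -> A) (muB : B -> B -> B) r
    (s t : seq (A * B)) : seq (A * B) :=
  flatten [seq flatten [seq [seq (muA p.1 x.1, muB x.2 q.2) | x <- r p.2 q.1]
                        | q <- t] | p <- s].

End Twisting.
End TensorDefs.

(* Each structure map of the twisted objects is the old one followed by
   alA (x) alB.  So the Hom-twisting conditions are the twisting conditions
   composed with alA (x) alB, once R o (alB (x) alA) is rewritten as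
   (alA (x) alB) o R, and the two products on A (x) B agree on the nose. *)
From mathcomp Require Import all_boot all_algebra.
Set Implicit Arguments. Unset Strict Implicit. Unset Printing Implicit Defensive.
Import GRing.Theory.
Local Open Scope ring_scope.

Section TensorEquality.
Variables (k : fieldType) (U V : lmodType k).

Lemma teq_sym (s t : seq (U * V)) : teq s t -> teq t s.
Proof. by move=> st W f bf; rewrite (st W f bf). Qed.

Lemma teq_trans (s t u : seq (U * V)) : teq s t -> teq t u -> teq s u.
Proof. by move=> st tu W f bf; rewrite (st W f bf) (tu W f bf). Qed.

Lemma teq_map (f : U -> U) (g : V -> V) (s t : seq (U * V)) :
  linmap f -> linmap g -> teq s t ->
  teq [seq (f p.1, g p.2) | p <- s] [seq (f p.1, g p.2) | p <- t].
Proof.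
move=> lin_f lin_g st W F [F1 F2]; rewrite !big_map.
apply: (st W (fun u v => F (f u) (g v))); split.
- by move=> v c u u'; rewrite lin_f F1.
- by move=> u c v v'; rewrite lin_g F2.
Qed.

End TensorEquality.

Lemma hom_assoc_twist_mul (k : fieldType) (A : lmodType k)
    (mu : A -> A -> A) (al : A -> A) :
  assoc_alg mu -> alg_map mu al -> hom_assoc_alg (twist_mul al mu) al.
Proof.
rewrite /twist_mul => -[[mu1 mu2] muA] [lin_al al_mu]; split => //.
- by split=> [v c u u' | u c v v']; rewrite ?mu1 ?mu2 lin_al.
- by move=> x y; rewrite al_mu.
- by move=> x y z; rewrite !al_mu muA.
Qed.

Section TwistedTwistingMap.
Variables (k : fieldType) (A B : lmodType k).
Variables (alA : A -> A) (alB : B -> B) (r : B -> A -> seq (A * B)).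
Hypotheses (lin_alA : linmap alA) (lin_alB : linmap alB).
Hypothesis r_comm : tw_comm alA alB r.

Lemma tw_condA_twist_mul (muA : A -> A -> A) :
  tw_condA muA id r -> tw_condA (twist_mul alA muA) alB r.
Proof.
move=> condA s; set s' := [seq (p.1.1, muA p.1.2 p.2) | p <- s].
have -> : [seq (alB p.1.1, twist_mul alA muA p.1.2 p.2) | p <- s]
        = [seq (alB p.1, alA p.2) | p <- s'] by rewrite -map_comp.
apply: teq_trans (teq_sym (r_comm s')) _.
by have := teq_map lin_alA lin_alB (condA s); rewrite -map_comp.
Qed.

Lemma tw_condB_twist_mul (muB : B -> B -> B) :
  tw_condB muB id r -> tw_condB (twist_mul alB muB) alA r.
Proof.
move=> condB s; set s' := [seq (muB p.1.1 p.1.2, p.2) | p <- s].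
have -> : [seq (twist_mul alB muB p.1.1 p.1.2, alA p.2) | p <- s]
        = [seq (alB p.1, alA p.2) | p <- s'] by rewrite -map_comp.
apply: teq_trans (teq_sym (r_comm s')) _.
by have := teq_map lin_alA lin_alB (condB s); rewrite -map_comp.
Qed.

End TwistedTwistingMap.

Lemma tprod_twist_mul (k : fieldType) (A B : lmodType k)
    (muA : A -> A -> A) (muB : B -> B -> B) (alA : A -> A) (alB : B -> B)
    (r : B -> A -> seq (A * B)) (s t : seq (A * B)) :
  tprod (twist_mul alA muA) (twist_mul alB muB) r s t
  = [seq (alA p.1, alB p.2) | p <- tprod muA muB r s t].
Proof.
rewrite /tprod map_flatten -map_comp; congr flatten; apply: eq_map => p /=.
rewrite map_flatten -map_comp; congr flatten; apply: eq_map => q /=.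
by rewrite -map_comp.
Qed.

Theorem proposition2p10 (k : fieldType) (A B : lmodType k)
    (muA : A -> A -> A) (muB : B -> B -> B) (alA : A -> A) (alB : B -> B)
    (r : B -> A -> seq (A * B)) :
  assoc_alg muA -> assoc_alg muB ->
  alg_map muA alA -> alg_map muB alB ->
  twisting_map muA muB r ->
  tw_comm alA alB r ->
  [/\ hom_assoc_alg (twist_mul alA muA) alA,
      hom_assoc_alg (twist_mul alB muB) alB,
      hom_twisting_map (twist_mul alA muA) alA (twist_mul alB muB) alB r &
      (forall s t : seq (A * B),
         teq (tprod (twist_mul alA muA) (twist_mul alB muB) r s t)
             [seq (alA p.1, alB p.2) | p <- tprod muA muB r s t])].
Proof.
move=> assocA assocB mapA mapB [lin_r condA condB] r_comm.
split; [exact: hom_assoc_twist_mul | exact: hom_assoc_twist_mul | split | ] => //.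
- exact: tw_condA_twist_mul mapA.1 mapB.1 r_comm _ condA.
- exact: tw_condB_twist_mul mapA.1 mapB.1 r_comm _ condB.
- by move=> s t; rewrite tprod_twist_mul.
Qed.
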